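(* In every run of the algorithm described in the context, for all $i,j\in\{1,\dots,n\}$, every change of the value of the local variable $w\_sync_i[j]$ increases it by exactly $1$.
   Context: Model. There are $n$ asynchronous processes $p_1,\dots,p_n$, of which up to $t<n/2$ may crash; a process runs its algorithm correctly until it crashes. Each ordered pair of processes is linked by a reliable (no loss, corruption, duplication or creation), asynchronous, not necessarily FIFO channel. $p_w$ is the single writer, invoking writes sequentially; $v_0$ is the initial value. Messages: $\textsc{write}(b,v)$ with $b\in\{0,1\}$, which stands for the two types $\textsc{write0}(v)$ and $\textsc{write1}(v)$; $\textsc{read}()$; $\textsc{proceed}()$. Variables of $p_i$. These are: $history_i$ with $history_i[0]=v_0$; $w\_sync_i[1..n]$, initially all $0$; $r\_sync_i[1..n]$, initially all $0$. $\mathsf{write}(v)$ by $p_w$: $wsn\gets w\_sync_w[w]+1$; $w\_sync_w[w]\gets wsn$; $history_w[wsn]\gets v$. Send $\textsc{write}(wsn\bmod 2,v)$ to each $p_j$ with $w\_sync_w[j]=wsn-1$. Wait until at least $n-t$ indices $j$ have $w\_sync_w[j]=wsn$. Return. $\mathsf{read}()$ by $p_i$: $r\_sync_i[i]\gets r\_sync_i[i]+1$ and call the new value $rsn$. Send $\textsc{read}()$ to all $p_j$ with $j\ne i$. Wait until at least $n-t$ indices $j$ have $r\_sync_i[j]=rsn$. Let $sn\gets w\_sync_i[i]$. Wait until at least $n-t$ indices $j$ have $w\_sync_i[j]\ge sn$. Return $history_i[sn]$. On receipt of $\textsc{write}(b,v)$ from $p_j$ at $p_i$: Wait until $b=(w\_sync_i[j]+1)\bmod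 2$. Let $wsn\gets w\_sync_i[j]+1$. If $wsn=w\_sync_i[i]+1$, then set $w\_sync_i[i]\gets wsn$ and $history_i[wsn]\gets v$, and send $\textsc{write}(wsn\bmod 2,v)$ to each $p_\ell$ with $w\_sync_i[\ell]=wsn-1$. Else, if $wsn<w\_sync_i[i]$, send $\textsc{write}((wsn+1)\bmod 2,history_i[wsn+1])$ to $p_j$. Finally set $w\_sync_i[j]\gets wsn$. On receipt of $\textsc{read}()$ from $p_j$ at $p_i$: Let $sn\gets w\_sync_i[i]$; wait until $w\_sync_i[j]\ge sn$; send $\textsc{proceed}()$ to $p_j$. On receipt of $\textsc{proceed}()$ from $p_j$ at $p_i$: $r\_sync_i[j]\gets r\_sync_i[j]+1$. Message handlers run concurrently; a waiting handler does not block the reception of other messages. *)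

From mathcomp Require Import all_boot.
Set Implicit Arguments.
Unset Strict Implicit.
Unset Printing Implicit Defensive.

Section Algorithm.

(* n processes p_0..p_{n-1} (indexed by 'I_n), at most t crashes,
   p_w is the single writer, V the value type, v0 the initial value. *)
Variables (n t : nat) (w : 'I_n) (V : Type) (v0 : V).

(* Messages: WRITE(b,v) (b = 0 or 1), READ(), PROCEED(). *)
Inductive msg := MWrite of nat & V | MRead | MProceed.

Record packet := Pkt { src : 'I_n; dst : 'I_n; payload : msg }.

(* A handler instance that has been started (message received) and is
   possibly waiting.  For READ() the value sn = w_sync_i[i] is captured at
   receipt time, as in the code. *)
Inductive handler :=
  | HWrite of 'I_n & nat & V      (* sender j, bit b, value v *)
  | HRead of 'I_n & nat.          (* sender j, captured sn *)

Inductive opstate :=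
  | Idle
  | WriteWait of nat              (* waiting after write, with wsn *)
  | ReadWait1 of nat              (* first wait of read, with rsn *)
  | ReadWait2 of nat.             (* second wait of read, with sn *)

Record pstate := PState {
  history : nat -> V;
  w_sync : 'I_n -> nat;
  r_sync : 'I_n -> nat;
  op : opstate;
  handlers : seq handler;
  crashed : bool }.

Record gstate := GState { procs : 'I_n -> pstate; net : seq packet }.

Definition upd (A : Type) (f : 'I_n -> A) (k : 'I_n) (x : A) : 'I_n -> A :=
  fun l => if l == k then x else f l.

Definition updh (f : nat -> V) (k : nat) (x : V) : nat -> V :=
  fun l => if l == k then x else f l.

(* history_i[0] = v0; the other (not yet written) entries are given the
   arbitrary default v0. *)
Definition init_pstate : pstate :=
  PState (fun _ => v0) (fun _ => 0) (fun _ => 0) Idle [::] false.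

Definition init_gstate : gstate := GState (fun _ => init_pstate) [::].

Definition set_proc (s : gstate) (i : 'I_n) (p : pstate) (out : seq packet)
  : gstate :=
  GState (upd (procs s) i p) (net s ++ out).

Definition with_ws (p : pstate) (ws : 'I_n -> nat) : pstate :=
  PState (history p) ws (r_sync p) (op p) (handlers p) (crashed p).
Definition with_hist_ws (p : pstate) (h : nat -> V) (ws : 'I_n -> nat)
  : pstate :=
  PState h ws (r_sync p) (op p) (handlers p) (crashed p).
Definition with_rs (p : pstate) (rs : 'I_n -> nat) : pstate :=
  PState (history p) (w_sync p) rs (op p) (handlers p) (crashed p).
Definition with_op (p : pstate) (o : opstate) : pstate :=
  PState (history p) (w_sync p) (r_sync p) o (handlers p) (crashed p).
Definition with_handlers (p : pstate) (hs : seq handler) : pstate :=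
  PState (history p) (w_sync p) (r_sync p) (op p) hs (crashed p).
Definition with_crashed (p : pstate) : pstate :=
  PState (history p) (w_sync p) (r_sync p) (op p) (handlers p) true.

(* Body of the WRITE(b,v) handler at p_i for a message from p_j, executed
   (atomically) once its wait condition holds.  Returns new local state and
   the messages sent. *)
Definition write_body (i j : 'I_n) (v : V) (p : pstate) : pstate * seq packet :=
  let wsn := (w_sync p j).+1 in
  if wsn == (w_sync p i).+1 then
    let ws1 := upd (w_sync p) i wsn in
    let h1 := updh (history p) wsn v in
    let out := [seq Pkt i l (MWrite (wsn %% 2) v)
               | l <- enum 'I_n & ws1 l == wsn - 1] in
    (with_hist_ws p h1 (upd ws1 j wsn), out)
  else if wsn < w_sync p i then
    (with_ws p (upd (w_sync p) j wsn),
     [:: Pkt i j (MWrite (wsn.+1 %% 2) (history p wsn.+1))])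
  else (with_ws p (upd (w_sync p) j wsn), [::]).

Definition ncrashed (s : gstate) : nat := #|[pred k : 'I_n | crashed (procs s k)]|.

(* One atomic step of the system.  Only waits are interleaving points:
   the code between two waits executes atomically. *)
Inductive step : gstate -> gstate -> Prop :=
  | StWriteInv s v :
      let p := procs s w in
      ~~ crashed p -> op p = Idle ->
      let wsn := (w_sync p w).+1 in
      let ws1 := upd (w_sync p) w wsn in
      let out := [seq Pkt w l (MWrite (wsn %% 2) v)
                 | l <- enum 'I_n & ws1 l == wsn - 1] in
      step s (set_proc s w
                (with_op (with_hist_ws p (updh (history p) wsn v) ws1)
                   (WriteWait wsn)) out)
  | StWriteRet s wsn :
      let p := procs s w in
      ~~ crashed p -> op p = WriteWait wsn ->
      n - t <= #|[pred j : 'I_n | w_sync p j == wsn]| ->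
      step s (set_proc s w (with_op p Idle) [::])
  | StReadInv s i :
      let p := procs s i in
      ~~ crashed p -> op p = Idle ->
      let rsn := (r_sync p i).+1 in
      let out := [seq Pkt i l MRead | l <- enum 'I_n & l != i] in
      step s (set_proc s i
                (with_op (with_rs p (upd (r_sync p) i rsn)) (ReadWait1 rsn))
                out)
  | StReadMid s i rsn :
      let p := procs s i in
      ~~ crashed p -> op p = ReadWait1 rsn ->
      n - t <= #|[pred j : 'I_n | r_sync p j == rsn]| ->
      step s (set_proc s i (with_op p (ReadWait2 (w_sync p i))) [::])
  (* second wait of read() completes; read returns history_i[sn] *)
  | StReadRet s i sn :
      let p := procs s i in
      ~~ crashed p -> op p = ReadWait2 sn ->
      n - t <= #|[pred j : 'I_n | sn <= w_sync p j]| ->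
      step s (set_proc s i (with_op p Idle) [::])
  | StRecvWrite s s1 s2 j i b v :
      net s = s1 ++ Pkt j i (MWrite b v) :: s2 ->
      let p := procs s i in
      ~~ crashed p ->
      step s (GState (upd (procs s) i
                        (with_handlers p (rcons (handlers p) (HWrite j b v))))
                     (s1 ++ s2))
  | StRecvRead s s1 s2 j i :
      net s = s1 ++ Pkt j i MRead :: s2 ->
      let p := procs s i in
      ~~ crashed p ->
      step s (GState (upd (procs s) i
                        (with_handlers p
                           (rcons (handlers p) (HRead j (w_sync p i)))))
                     (s1 ++ s2))
  | StRecvProceed s s1 s2 j i :
      net s = s1 ++ Pkt j i MProceed :: s2 ->
      let p := procs s i in
      ~~ crashed p ->
      step s (GState (upd (procs s) i
                        (with_rs p (upd (r_sync p) j (r_sync p j).+1)))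
                     (s1 ++ s2))
  | StExecWrite s i h1 h2 j b v :
      let p := procs s i in
      ~~ crashed p ->
      handlers p = h1 ++ HWrite j b v :: h2 ->
      b = (w_sync p j + 1) %% 2 ->
      let r := write_body i j v (with_handlers p (h1 ++ h2)) in
      step s (set_proc s i r.1 r.2)
  | StExecRead s i h1 h2 j sn :
      let p := procs s i in
      ~~ crashed p ->
      handlers p = h1 ++ HRead j sn :: h2 ->
      sn <= w_sync p j ->
      step s (set_proc s i (with_handlers p (h1 ++ h2)) [:: Pkt i j MProceed])
  | StCrash s i :
      ~~ crashed (procs s i) -> ncrashed s < t ->
      step s (GState (upd (procs s) i (with_crashed (procs s i))) (net s)).

(* A run: an infinite sequence of global states starting in the initial
   state, each transition being a step of the system or a stuttering step
   (so that finite executions are included). *)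
Definition is_run (r : nat -> gstate) : Prop :=
  r 0 = init_gstate /\ forall k, step (r k) (r k.+1) \/ r k.+1 = r k.

End Algorithm.

From mathcomp Require Import all_boot.

(* [w_sync] entries are only ever overwritten by [wsn], the successor of the
   entry being replaced: in the first branch of [write_body] both slots [i]
   and [j] receive [wsn = (w_sync p j).+1], which equals [(w_sync p i).+1]. *)
Lemma write_body_w_sync {n : nat} {V : Type} (i j : 'I_n) (v : V)
    (p : pstate n V) (l : 'I_n) :
  w_sync (write_body i j v p).1 l = w_sync p l \/
  w_sync (write_body i j v p).1 l = (w_sync p l).+1.
Proof.
rewrite /write_body /upd.
case: ifP => [/eqP wsn_eq|_]; last case: ifP => _; rewrite /=.
all: have [->|_] := eqVneq l j; [by right|].
all: try by left.
by have [->|_] := eqVneq l i; [rewrite wsn_eq; right | left].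
Qed.

Lemma step_w_sync {n t : nat} {w : 'I_n} {V : Type} {s s' : gstate n V}
    (i j : 'I_n) :
  step t w s s' ->
  w_sync (procs s' i) j = w_sync (procs s i) j \/
  w_sync (procs s' i) j = (w_sync (procs s i) j).+1.
Proof.
case=> /= *; rewrite /upd; have [->|_] := eqVneq i _; rewrite /=; try by left.
- by have [->|_] := eqVneq j w; [right | left].
- exact: write_body_w_sync.
Qed.

Theorem lemma1 (n t : nat) (w : 'I_n) (V : Type) (v0 : V) :
  2 * t < n ->
  forall r : nat -> gstate n V,
    is_run t w v0 r ->
    forall (k : nat) (i j : 'I_n),
      w_sync (procs (r k.+1) i) j <> w_sync (procs (r k) i) j ->
      w_sync (procs (r k.+1) i) j = (w_sync (procs (r k) i) j).+1.
Proof.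
move=> _ r [_ run_step] k i j ws_changed.
case: (run_step k) => [step_k|stutter]; last by rewrite stutter in ws_changed.
by case: (step_w_sync i j step_k).
Qed.
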